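(* Consider $\dot{x} = f(x) + g(x)u$, $x\in\mathcal{X}\subseteq\mathbb{R}^n$, $u\in\mathcal{U}\subseteq\mathbb{R}^m$, with $f,g$ continuously differentiable and $\mathcal{U}$ a convex polytope; let $h$ be continuously differentiable, $\mathcal{C}_S=\{x:h(x)\ge0\}$, and let $k_b$ be a backup controller with backup set $\mathcal{C}_B=\{x:h_b(x)\ge0\}\subseteq\mathcal{C}_S$ (see context). Let $k_e(x,\theta)$, $\theta\in\mathbb{R}^p$, be a parameterized expanding controller with values in $\mathcal{U}$, and let $\eta:\mathcal{X}\to[0,1]$ be continuously differentiable with $\eta(x)=1$ for all $x\in\mathcal{C}_B$. Consider the augmented state $\hat x = (x,\theta)\in\hat{\mathcal{X}} = \mathcal{X}\times\mathbb{R}^p$ and augmented dynamics $$\dot{\hat x} = \hat f(\hat x)+\hat g(\hat x)\hat u,\quad \hat f(\hat x) = \begin{bmatrix} f(x)\\ 0_{p\times1}\end{bmatrix},\ \hat g(\hat x) = \begin{bmatrix} g(x) & 0_{n\times p}\\ 0_{p\times m} & I_p\end{bmatrix},$$ with $\hat u = (u,u_\theta)\in\hat{\mathcal{U}}=\mathcal{U}\times\mathbb{R}^p$. Define $\hat k_s(\hat x) = \big((1-\eta(x))k_e(x,\theta)+\eta(x)k_b(x),\ 0_{p\times1}\big)$ and $\hat{\mathcal{C}}_B = \{\hat x\in\hat{\mathcal{X}}: h_b(x)\ge 0\}$. Then $\hat k_s$ renders $\hat{\mathcal{C}}_B$ forward invariant along the augmented system $\dot{\hat x} = \hat f(\hat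 x)+\hat g(\hat x)\hat k_s(\hat x)$.
   Context: A set is forward invariant along a closed-loop system if solutions starting in it remain in it for all $t\ge0$. A backup controller is a continuously differentiable $k_b:\mathcal{X}\to\mathcal{U}$ rendering $\mathcal{C}_B=\{x\in\mathcal{X}: h_b(x)\ge0\}\subseteq\mathcal{C}_S$ forward invariant for $\dot x=f(x)+g(x)k_b(x)$, where $h_b$ is continuously differentiable with $\nabla h_b(x)\neq0$ on $\partial\mathcal{C}_B$. *)

From HB Require Import structures.
From mathcomp Require Import all_boot all_order all_algebra.
From mathcomp Require Import all_classical all_reals all_analysis.
Set Implicit Arguments. Unset Strict Implicit. Unset Printing Implicit Defensive.
Import Order.TTheory GRing.Theory Num.Theory.
Import numFieldNormedType.Exports.
Local Open Scope classical_set_scope.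
Local Open Scope ring_scope.

(* Continuously differentiable on a set X (X open in all uses):
   differentiable at every point of X, and every directional derivative
   y |-> 'D_v F y is continuous at every point of X. *)
Definition C1_on (R : realType) (V W : normedModType R) (X : set V) (F : V -> W) : Prop :=
  (forall x, X x -> differentiable F x) /\
  (forall v x, X x -> {for x, continuous (fun y => 'D_v F y)}).

Definition bdry (R : realType) (V : normedModType R) (A : set V) : set V :=
  closure A `\` interior A.

Definition convex_polytope (R : realType) (m : nat) (U : set 'cV[R]_m) : Prop :=
  [/\ exists (k : nat) (A : 'M[R]_(k, m)) (b : 'cV[R]_k),
        U = [set u | forall i : 'I_k, (A *m u) i ord0 <= b i ord0],
      bounded_set U & U !=set0].

Definition is_solution (R : realType) (V : normedModType R) (Xs : set V)
    (F : V -> V) (phi : R -> V) (T : R) : Prop :=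
  forall t : R, 0 <= t <= T -> Xs (phi t) /\ is_derive t (1 : R) phi (F (phi t)).

Definition forward_invariant (R : realType) (V : normedModType R) (Xs : set V)
    (F : V -> V) (C : set V) : Prop :=
  forall (phi : R -> V) (T : R), 0 <= T -> is_solution Xs F phi T ->
    C (phi 0) -> forall t : R, 0 <= t <= T -> C (phi t).

(* While the state lies in the backup set, eta = 1: the state component of the
   augmented field is the backup closed loop and the parameter is frozen.  The
   backup closed loop is C^1, hence locally Lipschitz, so by Picard-Lindelöf it
   has a local solution from every point of the backup set, which stays in the
   backup set by its forward invariance; with the parameter held constant this
   is a local solution of the augmented system.  The augmented field is locally
   Lipschitz as well, so solutions are unique, and a real-induction argument along
   [0, T] shows that an augmented solution starting in the augmented backup set
   never leaves it. *)

From HB Require Import structures.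
From mathcomp Require Import all_boot all_order all_algebra.
From mathcomp Require Import all_classical all_reals all_analysis.
From mathcomp Require Import ring lra.
Import Order.TTheory GRing.Theory Num.Theory.
Import numFieldNormedType.Exports.
Set Implicit Arguments. Unset Strict Implicit. Unset Printing Implicit Defensive.
Local Open Scope classical_set_scope.
Local Open Scope ring_scope.

Section real_induction.
Context {R : realType}.

Lemma segment_induction (P : R -> Prop) (a b : R) :
  P a ->
  (forall t, a < t <= b -> (forall s, a <= s < t -> P s) -> P t) ->
  (forall t, a <= t < b -> (forall s, a <= s <= t -> P s) ->
    exists2 d, 0 < d & forall s, t < s <= t + d -> P s) ->
  forall t, a <= t <= b -> P t.
Proof.
move=> Pa closedP openP t /andP[a_le_t t_le_b].
pose S := [set t | a <= t <= b /\ forall s, a <= s <= t -> P s].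
have Sa : S a.
  split=> [|s /andP[a_le_s s_le_a]]; first by rewrite lexx (le_trans a_le_t).
  by have -> : s = a by apply/eqP; rewrite eq_le s_le_a a_le_s.
have supS : has_sup S by split; [exists a | exists b => s [/andP[]]].
pose c := sup S.
have a_le_c : a <= c by exact: sup_upper_bound.
have c_le_b : c <= b by apply: ge_sup; [exists a | move=> s [/andP[]]].
have below s : a <= s < c -> P s.
  move=> /andP[a_le_s s_lt_c].
  have [x [_ Px] cx] := sup_adherent (ltac:(by rewrite subr_gt0) : 0 < c - s) supS.
  by apply: Px; rewrite a_le_s; move: cx; rewrite /c; lra.
have Pc : P c.
  have [<-|a_ne_c] := eqVneq a c; first exact: Pa.
  by apply: closedP => //; rewrite lt_neqAle a_ne_c a_le_c.
have Sc : S c.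
  split=> [|s /andP[a_le_s s_le_c]]; first by rewrite a_le_c.
  have [s_lt_c|c_le_s] := ltP s c; first by apply: below; rewrite a_le_s.
  by have -> : s = c by apply/eqP; rewrite eq_le s_le_c.
have c_eq_b : c = b.
  apply/eqP; rewrite eq_le c_le_b leNgt; apply/negP => c_lt_b.
  have [d d_gt0 Pd] := openP c (ltac:(by rewrite a_le_c)) Sc.2.
  pose e := Num.min d (b - c).
  have e_gt0 : 0 < e by rewrite lt_min d_gt0 subr_gt0.
  have e_le_d : e <= d by rewrite ge_min lexx.
  have e_le_bc : e <= b - c by rewrite ge_min lexx orbT.
  suff /sup_upper_bound : S (c + e) by move=> /(_ supS); rewrite -/c; lra.
  split=> [|s /andP[a_le_s s_le_ce]]; first by apply/andP; split; lra.
  have [s_le_c|c_lt_s] := leP s c; first by apply: Sc.2; rewrite a_le_s.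
  by apply: Pd; rewrite c_lt_s; lra.
by apply: Sc.2; rewrite a_le_t c_eq_b.
Qed.

Lemma closed_left_limit (V : topologicalType) (A : set V) (g : R -> V) (a t : R) :
  closed A -> a < t -> {for t, continuous g} ->
  (forall s, a <= s < t -> A (g s)) -> A (g t).
Proof.
move=> closedA a_lt_t g_cont Ag.
apply: (closed_cvg _ closedA _ _ (cvg_at_left_filter g_cont)).
near=> s; apply: Ag; apply/andP; split; last by near: s; exact: nbhs_left_lt.
suff : t - s < t - a by lra.
by near: s; apply: nbhs_left_ltBl; rewrite subr_gt0.
Unshelve. all: by end_near.
Qed.

End real_induction.

Section mean_value_inequality.
Context {R : realType} {W : normedModType R}.
Implicit Types (w dw : R -> W).

Lemma is_derive_continuous w (t : R) D : is_derive t (1 : R) w D -> {for t, continuous w}.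
Proof. by case=> w_der _; apply: differentiable_continuous; rewrite -derivable1_diffP. Qed.

Lemma is_derive_increment w (t : R) D e : is_derive t (1 : R) w D -> 0 < e ->
  exists2 d, 0 < d & forall h, 0 < h < d -> `|w (t + h) - w t| <= (`|D| + e) * h.
Proof.
move=> [w_der <-] e_gt0.
move/cvgrPdist_lt : w_der => /(_ e e_gt0) /nbhs_ballP[d d_gt0 near_t].
exists d => // h /andP[h_gt0 h_lt_d].
have := near_t h; rewrite -ball_normE /= sub0r normrN gtr0_norm //.
move=> /(_ h_lt_d (lt0r_neq0 h_gt0)).
set q := h^-1 *: _ => Dq.
have -> : w (t + h) - w t = h *: q.
  rewrite /q scalerA mulfV ?lt0r_neq0 // scale1r /=.
  by rewrite -(addrC t); congr (w (_ + _) - _); rewrite /GRing.scale /= mulr1.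
rewrite normrZ gtr0_norm // mulrC ler_wpM2r ?ltW //.
have : `|q| <= `|derive w t 1| + `|derive w t 1 - q|.
  by rewrite -{1}(subKr (derive w t 1) q) ler_normB.
by move/le_lt_trans; apply; rewrite ltrD2l.
Qed.

Lemma mean_value_ineq w dw (a b B : R) : a <= b ->
  (forall t, a <= t <= b -> is_derive t (1 : R) w (dw t)) ->
  (forall t, a <= t <= b -> `|dw t| <= B) ->
  `|w b - w a| <= B * (b - a).
Proof.
move=> a_le_b w_der dw_le.
have [<-|a_ne_b] := eqVneq a b; first by rewrite !subrr normr0 mulr0.
have ba_gt0 : 0 < b - a by rewrite subr_gt0 lt_neqAle a_ne_b.
apply/ler_addgt0Pr => e e_gt0.
have e'_gt0 : 0 < e / (b - a) by rewrite divr_gt0.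
pose k := B + e / (b - a).
suff : `|w b - w a| <= k * (b - a) by rewrite /k mulrDl divfK ?gt_eqF.
apply: (@segment_induction _ (fun t => `|w t - w a| <= k * (t - a)) a b);
  last by rewrite a_le_b lexx.
- by rewrite !subrr normr0 mulr0.
- move=> t /andP[a_lt_t t_le_b] IH; rewrite -subr_ge0.
  apply: (closed_left_limit (g := fun s => k * (s - a) - `|w s - w a|)
    (closed_ge (y := 0)) a_lt_t); last by move=> s /IH; rewrite /= subr_ge0.
  have w_cont : {for t, continuous w}.
    by apply: is_derive_continuous (w_der t _); rewrite (ltW a_lt_t).
  apply: (@continuousB _ _ _ (fun s => k * (s - a)) (fun s => `|w s - w a|)).
    apply: (@continuousM _ _ (cst k) (fun s => s - a)); first exact: cvg_cst.
    by apply: (@continuousB _ _ _ id (cst a)); [exact: cvg_id | exact: cvg_cst].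
  apply: (continuous_comp (f := fun s => w s - w a)); last exact: norm_continuous.
  by apply: (@continuousB _ _ _ w (cst (w a))) => //; exact: cvg_cst.
- move=> t /andP[a_le_t t_lt_b] IH.
  have t_in : a <= t <= b by rewrite a_le_t ltW.
  have [d d_gt0 incr] := is_derive_increment (w_der t t_in) e'_gt0.
  exists (d / 2) => [|s /andP[t_lt_s s_le]]; first by rewrite divr_gt0.
  have := incr (s - t); rewrite subrKC => /(_ ltac:(apply/andP; split; lra)).
  have := ler_normD (w s - w t) (w t - w a); rewrite addrA subrK.
  have := IH t (ltac:(by rewrite a_le_t lexx)); have := dw_le t t_in.
  have : 0 <= s - t by lra.
  rewrite /k; nra.
Qed.

Lemma lipschitz_of_derive_bound w dw (a b K : R) :
  (forall t, a <= t <= b -> is_derive t (1 : R) w (dw t)) ->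
  (forall t, a <= t <= b -> `|dw t| <= K) ->
  forall u v, a <= u <= b -> a <= v <= b -> `|w u - w v| <= K * `|u - v|.
Proof.
move=> w_der dw_le.
suff le_uv u v : a <= u <= b -> a <= v <= b -> v <= u ->
    `|w u - w v| <= K * `|u - v|.
  move=> u v u_in v_in; have [v_le_u|u_lt_v] := leP v u; first exact: le_uv.
  by rewrite distrC (distrC u); apply: le_uv => //; exact: ltW.
move=> /andP[a_le_u u_le_b] /andP[a_le_v v_le_b] v_le_u.
rewrite ger0_norm ?subr_ge0 //.
by apply: mean_value_ineq => // t /andP[? ?]; [apply: w_der | apply: dw_le]; lra.
Qed.

End mean_value_inequality.

Section uniqueness.
Context {R : realType} {V : normedModType R}.
Implicit Types (w dw : R -> V).

Lemma derive_dominated_zero_short w dw (a b L : R) :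
  0 <= L -> a <= b -> (b - a) * L <= 2^-1 -> w a = 0 ->
  (forall t, a <= t <= b -> is_derive t (1 : R) w (dw t)) ->
  (forall t, a <= t <= b -> `|dw t| <= L * `|w t|) ->
  forall t, a <= t <= b -> w t = 0.
Proof.
move=> L_ge0 a_le_b abL wa w_der dw_le.
have nw_cont : {within `[a, b], continuous (fun s => `|w s|)}.
  apply: continuous_in_subspaceT => t; rewrite inE /= in_itv /= => t_in.
  exact: continuous_comp (is_derive_continuous (w_der t t_in)) (@norm_continuous _ _ _).
have [c c_in c_max] := EVT_max a_le_b nw_cont.
move: c_in; rewrite in_itv /= => /andP[a_le_c c_le_b].
(* |w c| is maximal, so the mean value inequality gives |w c| <= L |w c| (c - a) <= |w c| / 2. *)
have : `|w c| <= L * `|w c| * (c - a).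
  have := mean_value_ineq (w := w) (dw := dw) (B := L * `|w c|) a_le_c.
  rewrite wa subr0; apply=> t /andP[a_le_t t_le_c].
    by apply: w_der; rewrite a_le_t (le_trans t_le_c).
  apply: le_trans (dw_le t _) _; first by rewrite a_le_t (le_trans t_le_c).
  by rewrite ler_wpM2l //; apply: c_max; rewrite in_itv /= a_le_t (le_trans t_le_c).
have : (c - a) * L <= 2^-1 by apply: le_trans abL; rewrite ler_wpM2r // lerB.
have := normr_ge0 (w c); move=> wc_ge0 cL wc_le.
have wc0 : `|w c| = 0 by nra.
move=> t t_in; apply/normr0_eq0/eqP; rewrite eq_le normr_ge0 andbT -wc0.
by apply: c_max; rewrite in_itv.
Qed.

Lemma derive_dominated_zero w dw (a b L : R) : 0 <= L -> w a = 0 ->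
  (forall t, a <= t <= b -> is_derive t (1 : R) w (dw t)) ->
  (forall t, a <= t <= b -> `|dw t| <= L * `|w t|) ->
  forall t, a <= t <= b -> w t = 0.
Proof.
move=> L_ge0 wa w_der dw_le.
apply: segment_induction => // [t /andP[a_lt_t t_le_b] IH|t /andP[a_le_t t_lt_b] IH].
  apply/normr0_eq0/eqP; rewrite eq_le normr_ge0 andbT.
  apply: (closed_left_limit (g := fun s => `|w s|) (closed_le (y := 0)) a_lt_t).
    apply: continuous_comp (@norm_continuous _ _ _).
    by apply: is_derive_continuous (w_der t _); rewrite (ltW a_lt_t).
  by move=> s /IH ws0; rewrite /= ws0 normr0.
pose e := Num.min (2 * (L + 1))^-1 (b - t).
have L1_gt0 : 0 < 2 * (L + 1) by rewrite mulr_gt0 // ltr_wpDl.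
have e_gt0 : 0 < e by rewrite lt_min invr_gt0 L1_gt0 subr_gt0.
have e_le_L : e <= (2 * (L + 1))^-1 by rewrite ge_min lexx.
have e_le_b : e <= b - t by rewrite ge_min lexx orbT.
exists e => // s /andP[t_lt_s s_le_te].
suff w_zero u : t <= u <= t + e -> w u = 0 by apply: w_zero; rewrite (ltW t_lt_s).
apply: (derive_dominated_zero_short (dw := dw) L_ge0).
- by rewrite lerDl ltW.
- rewrite addrC addKr; move: e_le_L; rewrite -[_^-1]div1r ler_pdivlMr // => ?.
  by rewrite -[_^-1]div1r ler_pdivlMr //; have := ltW e_gt0; nra.
- by apply: IH; rewrite a_le_t lexx.
- by move=> v /andP[? ?]; apply: w_der; apply/andP; split; lra.
- by move=> v /andP[? ?]; apply: dw_le; apply/andP; split; lra.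
Qed.

End uniqueness.

Section matrix_norm.
Context {R : realType}.

Lemma mx_entry_norm_le a b (A : 'M[R]_(a, b)) i j : `|A i j| <= `|A|.
Proof.
rewrite [leRHS]/Num.Def.normr /= mx_normrE.
by apply/bigmax_geP; right => /=; exists (i, j).
Qed.

Lemma mx_norm_le_entries a b (A : 'M[R]_(a, b)) c : 0 <= c ->
  (forall i j, `|A i j| <= c) -> `|A| <= c.
Proof.
move=> c_ge0 A_le; rewrite [leLHS]/Num.Def.normr /= mx_normrE.
by apply: bigmax_le => // -[i j] _; exact: A_le.
Qed.

Lemma mx_norm_mulmx a k b (A : 'M[R]_(a, k)) (B : 'M[R]_(k, b)) :
  `|A *m B| <= k%:R * (`|A| * `|B|).
Proof.
apply: mx_norm_le_entries => [|i j]; first by rewrite !mulr_ge0.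
rewrite mxE; apply: le_trans (ler_norm_sum _ _ _) _.
apply: le_trans (_ : \sum_(l < k) (`|A| * `|B|) <= _).
  by apply: ler_sum => l _; rewrite normrM ler_pM // mx_entry_norm_le.
by rewrite sumr_const card_ord mulr_natl.
Qed.

Lemma usubmx_norm_le a p (v : 'cV[R]_(a + p)) : `|usubmx v| <= `|v|.
Proof. by apply: mx_norm_le_entries => // i j; rewrite mxE mx_entry_norm_le. Qed.

Lemma col_mx0_norm_le a p (v : 'cV[R]_a) : `|col_mx v (0 : 'cV[R]_p)| <= `|v|.
Proof.
apply: mx_norm_le_entries => // i j; rewrite mxE.
by case: splitP => k _; rewrite ?mxE ?normr0 ?mx_entry_norm_le.
Qed.

End matrix_norm.

Section locally_lipschitz.
Context {R : realType}.

Definition lipschitz_ball {V W : normedModType R} (F : V -> W) (x0 : V) (r L : R) :=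
  forall x y, `|x0 - x| < r -> `|x0 - y| < r -> `|F x - F y| <= L * `|x - y|.

Definition locally_lipschitz {V W : normedModType R} (F : V -> W) (x0 : V) :=
  exists2 r, 0 < r & exists2 L, 0 <= L & lipschitz_ball F x0 r L.

Context {V : normedModType R}.

Lemma lipschitz_ball_le (W : normedModType R) (F : V -> W) x0 r r' L : r' <= r ->
  lipschitz_ball F x0 r L -> lipschitz_ball F x0 r' L.
Proof. by move=> r'_le F_lip x y x_r' y_r'; apply: F_lip; apply: lt_le_trans r'_le. Qed.

Lemma lipschitz_ball_bound (W : normedModType R) (F : V -> W) x0 r L :
  0 <= L -> lipschitz_ball F x0 r L -> forall x, `|x0 - x| < r -> `|F x| <= `|F x0| + L * r.
Proof.
move=> L_ge0 F_lip x x_r.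
have x0_r : `|x0 - x0| < r by rewrite subrr normr0 (le_lt_trans _ x_r).
have Fx : `|F x - F x0| <= L * r.
  by rewrite (le_trans (F_lip x x0 x_r x0_r)) // distrC ler_wpM2l // ltW.
have := ler_normD (F x - F x0) (F x0); rewrite subrK => /le_trans; apply.
by rewrite addrC lerD2l.
Qed.

Lemma locally_lipschitz_continuous (W : normedModType R) (F : V -> W) x0 :
  locally_lipschitz F x0 -> {for x0, continuous F}.
Proof.
move=> [r r_gt0 [L L_ge0 F_lip]]; apply/cvgrPdist_le => e e_gt0.
have L1_gt0 : 0 < L + 1 by rewrite ltr_wpDl.
apply/nbhs_ballP; exists (Num.min r (e / (L + 1))) => /=.
  by rewrite lt_min r_gt0 divr_gt0.
move=> x; rewrite -ball_normE /= lt_min => /andP[x_r x_e].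
have x0_r : `|x0 - x0| < r by rewrite subrr normr0.
apply: le_trans (F_lip _ _ x0_r x_r) _.
by move: x_e; rewrite ltr_pdivlMr // => x_e; have := normr_ge0 (x0 - x); nra.
Qed.

Lemma locally_lipschitz_nonexpansive (W : normedModType R) (F : V -> W) x0 :
  (forall x y, `|F x - F y| <= `|x - y|) -> locally_lipschitz F x0.
Proof. by move=> F_le; exists 1 => //; exists 1 => // x y _ _; rewrite mul1r. Qed.

Lemma locally_lipschitz_cst (W : normedModType R) (c : W) x0 :
  locally_lipschitz (fun _ : V => c) x0.
Proof.
by exists 1 => //; exists 0 => // x y _ _; rewrite subrr normr0 mul0r.
Qed.

Lemma locally_lipschitzN (W : normedModType R) (F : V -> W) x0 :
  locally_lipschitz F x0 -> locally_lipschitz (fun x => - F x) x0.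
Proof.
move=> [r r_gt0 [L L_ge0 F_lip]]; exists r => //; exists L => // x y x_r y_r.
by rewrite -opprD normrN; exact: F_lip.
Qed.

Lemma locally_lipschitzD (W : normedModType R) (F G : V -> W) x0 :
  locally_lipschitz F x0 -> locally_lipschitz G x0 ->
  locally_lipschitz (fun x => F x + G x) x0.
Proof.
move=> [r1 r1_gt0 [L1 L1_ge0 F_lip]] [r2 r2_gt0 [L2 L2_ge0 G_lip]].
exists (Num.min r1 r2); first by rewrite lt_min r1_gt0.
exists (L1 + L2); first exact: addr_ge0.
move=> x y; rewrite !lt_min => /andP[x_r1 x_r2] /andP[y_r1 y_r2].
rewrite opprD addrACA mulrDl (le_trans (ler_normD _ _)) //.
by rewrite lerD ?F_lip ?G_lip.
Qed.

Lemma locally_lipschitz_bilinear (U1 U2 W : normedModType R) (B : U1 -> U2 -> W) (c : R)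
    (F1 : V -> U1) (F2 : V -> U2) x0 :
  0 <= c -> (forall a a' b, B (a - a') b = B a b - B a' b) ->
  (forall a b b', B a (b - b') = B a b - B a b') ->
  (forall a b, `|B a b| <= c * (`|a| * `|b|)) ->
  locally_lipschitz F1 x0 -> locally_lipschitz F2 x0 ->
  locally_lipschitz (fun x => B (F1 x) (F2 x)) x0.
Proof.
move=> c_ge0 BBl BBr B_le [r1 r1_gt0 [L1 L1_ge0 F1_lip]] [r2 r2_gt0 [L2 L2_ge0 F2_lip]].
pose r := Num.min r1 r2.
have r_gt0 : 0 < r by rewrite lt_min r1_gt0.
have [r_le1 r_le2] : r <= r1 /\ r <= r2 by rewrite !ge_min !lexx orbT.
have {}F1_lip := lipschitz_ball_le r_le1 F1_lip.
have {}F2_lip := lipschitz_ball_le r_le2 F2_lip.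
pose M1 := `|F1 x0| + L1 * r; pose M2 := `|F2 x0| + L2 * r.
have M1_ge0 : 0 <= M1 by rewrite addr_ge0 // mulr_ge0 // ltW.
have M2_ge0 : 0 <= M2 by rewrite addr_ge0 // mulr_ge0 // ltW.
have F1_le := lipschitz_ball_bound L1_ge0 F1_lip.
have F2_le := lipschitz_ball_bound L2_ge0 F2_lip.
exists r => //; exists (c * (L1 * M2 + M1 * L2)).
  by rewrite mulr_ge0 // addr_ge0 // mulr_ge0.
move=> x y x_r y_r.
have -> : B (F1 x) (F2 x) - B (F1 y) (F2 y)
    = B (F1 x - F1 y) (F2 x) + B (F1 y) (F2 x - F2 y).
  by rewrite BBl BBr addrA subrK.
apply: le_trans (ler_normD _ _) _; rewrite -mulrA mulrDl mulrDr.
apply: lerD; apply: le_trans (B_le _ _) _; rewrite ler_wpM2l //.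
  by rewrite mulrAC ler_pM ?F1_lip ?F2_le.
by rewrite -mulrA ler_pM ?F1_le ?F2_lip.
Qed.

Lemma locally_lipschitzZ (W : normedModType R) (a : V -> R) (F : V -> W) x0 :
  locally_lipschitz a x0 -> locally_lipschitz F x0 ->
  locally_lipschitz (fun x => a x *: F x) x0.
Proof.
apply: (locally_lipschitz_bilinear (c := 1)) => // [a1 a2 v|a1 v1 v2|a1 v].
- exact: scalerBl.
- exact: scalerBr.
- by rewrite normrZ mul1r.
Qed.

Lemma locally_lipschitz_mulmx a k b (A : V -> 'M[R]_(a, k)) (B : V -> 'M[R]_(k, b)) x0 :
  locally_lipschitz A x0 -> locally_lipschitz B x0 ->
  locally_lipschitz (fun x => A x *m B x) x0.
Proof.
apply: (locally_lipschitz_bilinear (c := k%:R)) => // [A1 A2 B1|A1 B1 B2|A1 B1].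
- exact: mulmxBl.
- exact: mulmxBr.
- exact: mx_norm_mulmx.
Qed.

Lemma locally_lipschitz_comp (U W : normedModType R) (H : V -> U) (F : U -> W) x0 :
  locally_lipschitz H x0 -> locally_lipschitz F (H x0) ->
  locally_lipschitz (fun x => F (H x)) x0.
Proof.
move=> [rH rH_gt0 [LH LH_ge0 H_lip]] [rF rF_gt0 [LF LF_ge0 F_lip]].
have LH1_gt0 : 0 < LH + 1 by rewrite ltr_wpDl.
pose r := Num.min rH (rF / (LH + 1)).
have [r_leH r_leF] : r <= rH /\ r <= rF / (LH + 1) by rewrite !ge_min !lexx orbT.
exists r; first by rewrite lt_min rH_gt0 divr_gt0.
exists (LF * LH); first exact: mulr_ge0.
have H_near x : `|x0 - x| < r -> `|H x0 - H x| < rF.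
  move=> x_r; have x0_r : `|x0 - x0| < rH by rewrite subrr normr0.
  apply: le_lt_trans (H_lip _ _ x0_r (lt_le_trans x_r r_leH)) _.
  move: r_leF; rewrite ler_pdivlMr // => r_leF.
  have := normr_ge0 (x0 - x); nra.
move=> x y x_r y_r; apply: le_trans (F_lip _ _ (H_near _ x_r) (H_near _ y_r)) _.
by rewrite -mulrA ler_wpM2l // H_lip // (lt_le_trans _ r_leH).
Qed.

End locally_lipschitz.

Section C1_locally_lipschitz.
Context {R : realType}.

Lemma segment_dist_lt (V : normedModType R) (x0 x y : V) (r s : R) :
  `|x0 - x| < r -> `|x0 - y| < r -> 0 <= s <= 1 -> `|x0 - (x + s *: (y - x))| < r.
Proof.
move=> x_r y_r /andP[s_ge0 s_le1].
have -> : x0 - (x + s *: (y - x)) = (1 - s) *: (x0 - x) + s *: (x0 - y).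
  by rewrite scalerBl scale1r !scalerBr opprD !opprB -!addrA addKr.
apply: le_lt_trans (ler_normD _ _) _.
rewrite !normrZ !ger0_norm ?subr_ge0 //.
pose m := Num.max `|x0 - x| `|x0 - y|.
have m_lt_r : m < r by rewrite gt_max x_r y_r.
have : (1 - s) * `|x0 - x| <= (1 - s) * m by rewrite ler_wpM2l ?subr_ge0 ?le_max ?lexx.
have : s * `|x0 - y| <= s * m by rewrite ler_wpM2l ?le_max ?lexx ?orbT.
lra.
Qed.

Lemma is_derive_segment (V W : normedModType R) (G : V -> W) (x v : V) (s : R) :
  derivable G (x + s *: v) v ->
  is_derive s (1 : R) (fun s => G (x + s *: v)) ('D_v G (x + s *: v)).
Proof.
have quotientE : (fun h : R => h^-1 *: (G (x + (h *: 1 + s) *: v) - G (x + s *: v)))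
    = (fun h : R => h^-1 *: (G (h *: v + (x + s *: v)) - G (x + s *: v))).
  by apply: funext => h; rewrite [h%:A]mulr1 scalerDl addrCA.
by move=> G_der; apply: DeriveDef; rewrite /derivable /derive /= quotientE.
Qed.

Lemma derive_col_basis (W : normedModType R) k (G : 'cV[R]_k -> W) (z v : 'cV[R]_k) :
  differentiable G z -> 'D_v G z = \sum_(j < k) v j 0 *: 'D_(delta_mx j 0) G z.
Proof.
move=> G_diff; rewrite deriveE // {1}(_ : v = \sum_(j < k) v j 0 *: delta_mx j 0).
  by rewrite linear_sum; apply: eq_bigr => j _; rewrite linearZ /= deriveE.
by rewrite {1}(matrix_sum_delta v); apply: eq_bigr => j _; rewrite big_ord1.
Qed.

Lemma C1_on_locally_lipschitz (W : normedModType R) k (A : set 'cV[R]_k)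
    (G : 'cV[R]_k -> W) (x0 : 'cV[R]_k) :
  C1_on A G -> nbhs x0 A -> locally_lipschitz G x0.
Proof.
move=> [G_diff D_cont] A_x0.
pose e j : 'cV[R]_k := delta_mx j 0.
pose K := \sum_(j < k) (`|'D_(e j) G x0| + 1).
have near_x0 : \forall y \near x0,
    A y /\ forall j, `|'D_(e j) G x0 - 'D_(e j) G y| < 1.
  apply: filterI => //.
  apply: (@filter_forall _ _ (fun j y => `|'D_(e j) G x0 - 'D_(e j) G y| < 1)
    _ (nbhs_filter x0)) => j.
  by move/cvgrPdist_lt : (D_cont (e j) x0 (nbhs_singleton A_x0)); apply.
have [r r_gt0 r_near] := (nbhs_ballP _ _).1 near_x0.
exists r => //; exists K; first by apply: sumr_ge0 => j _; rewrite addr_ge0.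
move=> x y x_r y_r; pose z s := x + s *: (y - x).
have z_near s : 0 <= s <= 1 ->
    A (z s) /\ forall j, `|'D_(e j) G x0 - 'D_(e j) G (z s)| < 1.
  by move=> s_in; apply: r_near; rewrite -ball_normE /= segment_dist_lt.
have Dz_le s : 0 <= s <= 1 -> `|'D_(y - x) G (z s)| <= K * `|y - x|.
  move=> /z_near[Az Dz]; rewrite derive_col_basis; last exact: G_diff.
  apply: le_trans (ler_norm_sum _ _ _) _; rewrite /K mulr_suml; apply: ler_sum => j _.
  rewrite normrZ mulrC ler_pM ?mx_entry_norm_le //.
  rewrite -{1}(subKr ('D_(e j) G x0) ('D_(e j) G (z s))) (le_trans (ler_normB _ _)) //.
  by rewrite lerD2l ltW.
have := mean_value_ineq (w := fun s => G (z s)) ler01 _ Dz_le.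
rewrite /z scale1r scale0r addr0 subr0 mulr1 subrKC distrC (distrC x); apply.
by move=> s /z_near[Az _]; apply: is_derive_segment; apply: diff_derivable; exact: G_diff.
Qed.

Lemma C1_on_open_locally_lipschitz (W : normedModType R) k (X : set 'cV[R]_k)
    (F : 'cV[R]_k -> W) (x : 'cV[R]_k) :
  open X -> C1_on X F -> X x -> locally_lipschitz F x.
Proof. by move=> X_open C1F Xx; apply: C1_on_locally_lipschitz C1F (open_nbhs_nbhs _). Qed.

End C1_locally_lipschitz.

Section matrix_derive.
Context {R : realType}.

Lemma is_derive_mx_entries a b (F : R -> 'M[R]_(a, b)) (t : R) (D : 'M[R]_(a, b)) :
  (forall i j, is_derive t (1 : R) (fun s => F s i j) (D i j)) ->
  is_derive t (1 : R) F D.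
Proof.
move=> F_der; have F_derivable : derivable F t 1.
  by apply/derivable_mxP => i j; case: (F_der i j).
apply: DeriveDef => //; rewrite derive_mx //.
by apply/matrixP => i j; rewrite mxE; case: (F_der i j).
Qed.

Lemma is_derive_col_mx a p (psi : R -> 'cV[R]_a) (th : 'cV[R]_p) (t : R) D :
  is_derive t (1 : R) psi D ->
  is_derive t (1 : R) (fun s => col_mx (psi s) th) (col_mx D 0).
Proof.
move=> [psi_der <-]; apply: is_derive_mx_entries => i j.
case: (split_ordP i) => k ->.
  rewrite col_mxEu; under eq_fun do rewrite col_mxEu.
  apply: DeriveDef; first by move/derivable_mxP : psi_der; apply.
  by rewrite derive_mx // mxE.
by rewrite !col_mxEd mxE; under eq_fun do rewrite col_mxEd; exact: is_derive_cst.
Qed.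

Lemma is_derive_translate (V : normedModType R) (phi : R -> V) (t s : R) (D : V) :
  is_derive (t + s) (1 : R) phi D -> is_derive s (1 : R) (fun s => phi (t + s)) D.
Proof.
have quotientE : (fun h : R => h^-1 *: (phi (t + (h *: 1 + s)) - phi (t + s)))
    = (fun h : R => h^-1 *: (phi (h *: 1 + (t + s)) - phi (t + s))).
  by apply: funext => h; rewrite addrCA.
by move=> [phi_der <-]; apply: DeriveDef; rewrite /derivable /derive /= quotientE.
Qed.

End matrix_derive.

Section sequence_bounds.
Context {R : realType}.

Lemma div_pow2_lt (c e : R) : 0 < e -> exists k, c / 2 ^+ k < e.
Proof.
move=> e_gt0; exists (Num.truncn (c / e)).+1.
have pow_gt0 : 0 < (2 : R) ^+ (Num.truncn (c / e)).+1 by rewrite exprn_gt0.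
rewrite ltr_pdivrMr // mulrC -ltr_pdivrMr //.
apply: lt_le_trans (truncnS_gt _) _.
by rewrite -natrX ler_nat ltnW // ltn_expl.
Qed.

Lemma le_div_pow2_slack (x y c : R) :
  (forall k, x <= y + c / 2 ^+ k) -> x <= y.
Proof.
move=> x_le; apply/ler_addgt0Pr => e /(div_pow2_lt c)[k ck].
by apply: le_trans (x_le k) _; rewrite lerD2l ltW.
Qed.

Lemma cvgn_dist_le (V : normedModType R) (u : nat -> V) (l x : V) (e : R) (N : nat) :
  u @ \oo --> l -> (forall k, (N <= k)%N -> `|x - u k| <= e) -> `|x - l| <= e.
Proof.
move=> u_l u_near; apply: (closed_cvg _ (@closed_closed_ball_ R _ x e) _ _ u_l).
by exists N => // k /=; exact: u_near.
Qed.

End sequence_bounds.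

Section picard_lindelof.
Context {R : realType}.
Notation mu := (@lebesgue_measure R).
Variables (n : nat) (G : 'cV[R]_n -> 'cV[R]_n) (x0 : 'cV[R]_n) (r L M h : R).
Hypotheses (r_gt0 : 0 < r) (L_ge0 : 0 <= L) (M_ge0 : 0 <= M) (h_gt0 : 0 < h).
Hypotheses (hM : M * h <= r / 2) (hL : L * h <= 2^-1).
Hypothesis G_lip : lipschitz_ball G x0 r L.
Hypothesis G_le : forall x, `|x0 - x| < r -> `|G x| <= M.

(* The base point lies outside [-h, h], so FTC applies at every point of [-h, h]. *)
Definition primitive (g : R -> R) (u : R) :=
  parameterized_integral mu (- (h + 1)) u g.

Lemma is_derive_primitive g u : continuous g -> - h <= u <= h ->
  is_derive u (1 : R) (primitive g) (g u).
Proof.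
move=> g_cont /andP[h_le_u u_le_h].
have g_int : mu.-integrable `[- (h + 1), h + 1] (EFin \o g).
  apply: continuous_compact_integrable; first exact: segment_compact.
  exact: continuous_subspaceT.
have [g_der g_deriv] := continuous_FTC1_closed
  (ltac:(lra) : u < h + 1) g_int (ltac:(lra) : - (h + 1) < u) (g_cont u).
by apply: DeriveDef => //; rewrite -derive1E.
Qed.

Definition clamp (t : R) := if t <= - h then - h else if h <= t then h else t.

Lemma clamp_in t : - h <= clamp t <= h.
Proof.
move: h_gt0 => ?; rewrite /clamp.
by have [?|?] := leP t (- h); have [?|?] := leP h t; apply/andP; split; lra.
Qed.

Lemma clamp_id t : - h <= t <= h -> clamp t = t.
Proof.
move: h_gt0 => ? /andP[? ?]; rewrite /clamp.
by have [?|?] := leP t (- h); have [?|?] := leP h t; lra.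
Qed.

Lemma clamp_dist t s : `|clamp t - clamp s| <= `|t - s|.
Proof.
have := ler_norm (t - s); have : - (t - s) <= `|t - s| by rewrite -normrN ler_norm.
set d := `|t - s| => ? ?; move: h_gt0 => ?; rewrite /clamp ler_norml.
by have [?|?] := leP t (- h); have [?|?] := leP h t;
  have [?|?] := leP s (- h); have [?|?] := leP h s; apply/andP; split; lra.
Qed.

Definition picard_coord (y : R -> 'cV[R]_n) (i : 'I_n) (s : R) := G (y s) i 0.

(* Clamping time to [-h, h] makes every Picard iterate a function on the whole
   line that is bounded and M-Lipschitz. *)
Definition picard (y : R -> 'cV[R]_n) (t : R) : 'cV[R]_n :=
  x0 + \col_i (primitive (picard_coord y i) (clamp t) - primitive (picard_coord y i) 0).

Definition admissible (y : R -> 'cV[R]_n) :=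
  (forall t, `|x0 - y t| <= r / 2) /\ (forall t s, `|y t - y s| <= M * `|t - s|).

Lemma admissible_ball y t : admissible y -> `|x0 - y t| < r.
Proof.
by move=> [y_near _]; apply: le_lt_trans (y_near t) _; rewrite gtr_pMr ?invf_lt1 ?ltr1n.
Qed.

Lemma picard_coord_continuous y i : admissible y -> continuous (picard_coord y i).
Proof.
move=> y_adm t; apply/cvgrPdist_le => e e_gt0.
have LM1_gt0 : 0 < L * M + 1 by rewrite ltr_wpDl // mulr_ge0.
apply/nbhs_ballP; exists (e / (L * M + 1)) => /=; first by rewrite divr_gt0.
move=> s /= ts.
have -> : picard_coord y i t - picard_coord y i s = (G (y t) - G (y s)) i 0.
  by rewrite !mxE.
apply: le_trans (mx_entry_norm_le _ i 0) _.
apply: le_trans (G_lip (admissible_ball _ y_adm) (admissible_ball _ y_adm)) _.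
apply: le_trans (_ : L * (M * `|t - s|) <= _).
  by rewrite ler_wpM2l //; case: y_adm => _; apply.
move: ts; rewrite ltr_pdivlMr // => ts.
have := normr_ge0 (t - s); have := mulr_ge0 L_ge0 M_ge0; nra.
Qed.

Lemma picard_coord_le y i s : admissible y -> `|picard_coord y i s| <= M.
Proof.
by move=> y_adm; apply: le_trans (mx_entry_norm_le _ _ _) (G_le (admissible_ball _ y_adm)).
Qed.

Lemma primitiveB_lipschitz (g1 g2 : R -> R) (K : R) u v :
  continuous g1 -> continuous g2 -> (forall s, `|g1 s - g2 s| <= K) ->
  - h <= u <= h -> - h <= v <= h ->
  `|(primitive g1 u - primitive g2 u) - (primitive g1 v - primitive g2 v)| <= K * `|u - v|.
Proof.
move=> g1_cont g2_cont g_le.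
apply: (lipschitz_of_derive_bound (w := fun u => primitive g1 u - primitive g2 u)
  (dw := fun u => g1 u - g2 u)) => [t t_in|t _]; last exact: g_le.
by apply: is_deriveB; apply: is_derive_primitive.
Qed.

Lemma primitive_lipschitz (g : R -> R) (K : R) u v :
  continuous g -> (forall s, `|g s| <= K) -> - h <= u <= h -> - h <= v <= h ->
  `|primitive g u - primitive g v| <= K * `|u - v|.
Proof.
move=> g_cont g_le.
apply: (lipschitz_of_derive_bound (dw := g)) => [t t_in|t _]; last exact: g_le.
exact: is_derive_primitive.
Qed.

Let zero_in : - h <= 0 <= h.
Proof. by rewrite oppr_le0 ltW. Qed.

Let clamp_norm t : `|clamp t| <= h.
Proof. by rewrite ler_norml clamp_in. Qed.

Lemma picard_near y t : admissible y -> `|picard y t - x0| <= M * h.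
Proof.
move=> y_adm; rewrite /picard addrC addKr.
apply: mx_norm_le_entries => [|i j]; first by rewrite mulr_ge0 // ltW.
rewrite mxE; apply: le_trans (primitive_lipschitz (picard_coord_continuous (i := i) y_adm)
  (fun s => picard_coord_le i s y_adm) (clamp_in t) zero_in) _.
by rewrite subr0 ler_wpM2l.
Qed.

Lemma picard_lipschitz y t s : admissible y ->
  `|picard y t - picard y s| <= M * `|t - s|.
Proof.
move=> y_adm; rewrite /picard opprD addrACA subrr add0r.
apply: mx_norm_le_entries => [|i j]; first by rewrite mulr_ge0.
rewrite !mxE opprB addrA subrK.
apply: le_trans (primitive_lipschitz (picard_coord_continuous (i := i) y_adm)
  (fun s => picard_coord_le i s y_adm) (clamp_in t) (clamp_in s)) _.
by rewrite ler_wpM2l // clamp_dist.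
Qed.

Lemma picard_admissible y : admissible y -> admissible (picard y).
Proof.
move=> y_adm; split=> [t|t s]; last exact: picard_lipschitz.
by rewrite distrC (le_trans (picard_near t y_adm)).
Qed.

Lemma picard_contraction y z (D : R) : admissible y -> admissible z ->
  (forall s, `|y s - z s| <= D) -> forall t, `|picard y t - picard z t| <= D / 2.
Proof.
move=> y_adm z_adm yz_le t.
have D_ge0 : 0 <= D by apply: le_trans (yz_le 0).
rewrite /picard opprD addrACA subrr add0r.
apply: mx_norm_le_entries => [|i j]; first by rewrite divr_ge0.
have sub_swap (a b c d : R) : a - b - (c - d) = a - c - (b - d) by ring.
rewrite !mxE sub_swap.
apply: le_trans (primitiveB_lipschitz (K := L * D) (picard_coord_continuous (i := i) y_adm)
  (picard_coord_continuous (i := i) z_adm) _ (clamp_in t) zero_in) _.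
  move=> s; have -> : picard_coord y i s - picard_coord z i s = (G (y s) - G (z s)) i 0.
    by rewrite !mxE.
  apply: le_trans (mx_entry_norm_le _ _ _) _.
  apply: le_trans (G_lip (admissible_ball s y_adm) (admissible_ball s z_adm)) _.
  by rewrite ler_wpM2l.
rewrite subr0; apply: le_trans (_ : L * D * h <= _); first by rewrite ler_wpM2l ?mulr_ge0.
by move: hL D_ge0; nra.
Qed.

Fixpoint picard_iter k : R -> 'cV[R]_n :=
  if k is k'.+1 then picard (picard_iter k') else fun=> x0.

Lemma picard_iter_admissible k : admissible (picard_iter k).
Proof.
elim: k => [|k IH] /=; last exact: picard_admissible.
by split=> [t|t s]; rewrite subrr normr0 ?mulr_ge0 ?divr_ge0 // ltW.
Qed.

Lemma picard_iter_step k t :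
  `|picard_iter k.+1 t - picard_iter k t| <= M * h / 2 ^+ k.
Proof.
elim: k t => [|k IH] t.
  by rewrite expr0 divr1 (picard_near t (picard_iter_admissible 0)).
apply: le_trans (picard_contraction (picard_iter_admissible _)
  (picard_iter_admissible _) IH t) _.
by rewrite exprSr invfM mulrA.
Qed.

Lemma picard_iter_tail k j t : `|picard_iter (j + k) t - picard_iter k t|
  <= 2 * (M * h) / 2 ^+ k - 2 * (M * h) / 2 ^+ (j + k).
Proof.
elim: j => [|j IH]; first by rewrite add0n !subrr normr0.
rewrite addSn; have := picard_iter_step (j + k) t.
have := ler_normD (picard_iter (j + k).+1 t - picard_iter (j + k) t)
  (picard_iter (j + k) t - picard_iter k t); rewrite addrA subrK.
have -> : 2 * (M * h) / 2 ^+ (j + k).+1 = M * h / 2 ^+ (j + k).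
  by rewrite exprS; field; rewrite gt_eqF.
by move: IH; lra.
Qed.

Lemma picard_iter_dist k m t : (k <= m)%N ->
  `|picard_iter m t - picard_iter k t| <= 2 * (M * h) / 2 ^+ k.
Proof.
move=> k_le_m; have := picard_iter_tail k (m - k) t; rewrite subnK //.
by move/le_trans; apply; rewrite gerBl !mulr_ge0 ?invr_ge0 ?exprn_ge0 // ltW.
Qed.

Definition picard_limit t := limn (fun k => picard_iter k t).

Lemma picard_iter_cvg t : (fun k => picard_iter k t) @ \oo --> picard_limit t.
Proof.
rewrite /picard_limit.
apply/cauchy_cvgP/cauchy_ballP => e e_gt0; near_simpl.
have [N NE] := div_pow2_lt (4 * (M * h)) e_gt0.
exists ([set k | (N <= k)%N], [set k | (N <= k)%N]); first by split; exists N.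
move=> [k m] [/= Nk Nm]; rewrite -ball_normE /=.
have := picard_iter_dist t Nk; have := picard_iter_dist t Nm.
have := ler_normD (picard_iter k t - picard_iter N t) (picard_iter N t - picard_iter m t).
rewrite addrA subrK distrC (distrC (picard_iter N t)).
have E : 4 * (M * h) / 2 ^+ N = 2 * (2 * (M * h) / 2 ^+ N) by ring.
by move: NE; rewrite E; lra.
Qed.

Lemma picard_limit_dist k t :
  `|picard_iter k t - picard_limit t| <= 2 * (M * h) / 2 ^+ k.
Proof.
apply: (cvgn_dist_le (picard_iter_cvg (t := t)) (N := k)) => m k_le_m.
by rewrite distrC picard_iter_dist.
Qed.

Lemma picard_limit_admissible : admissible picard_limit.
Proof.
split=> [t|t s].
  apply: (cvgn_dist_le (picard_iter_cvg (t := t)) (N := 0)) => k _.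
  by case: (picard_iter_admissible k) => + _; apply.
apply: (le_div_pow2_slack (c := 4 * (M * h))) => k.
have := picard_limit_dist k t; have := picard_limit_dist k s.
have [_ /(_ t s) Yk_lip] := picard_iter_admissible k.
have := ler_normD (picard_limit t - picard_iter k t) (picard_iter k t - picard_limit s).
have := ler_normD (picard_iter k t - picard_iter k s) (picard_iter k s - picard_limit s).
rewrite !addrA !subrK (distrC (picard_limit t) (picard_iter k t)).
have E : 4 * (M * h) / 2 ^+ k = 2 * (2 * (M * h) / 2 ^+ k) by ring.
by rewrite E; lra.
Qed.

Lemma picard_limit_fixed t : picard picard_limit t = picard_limit t.
Proof.
apply/eqP; rewrite -subr_eq0 -normr_le0.
apply: (le_div_pow2_slack (c := 2 * (M * h))) => k; rewrite add0r.
have lim_near s : `|picard_limit s - picard_iter k s| <= 2 * (M * h) / 2 ^+ k.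
  by rewrite distrC picard_limit_dist.
have := picard_contraction picard_limit_admissible (picard_iter_admissible k) lim_near t.
have := picard_limit_dist k.+1 t; rewrite [picard_iter k.+1]/=.
have := ler_normD (picard picard_limit t - picard (picard_iter k) t)
  (picard (picard_iter k) t - picard_limit t); rewrite addrA subrK.
have -> : 2 * (M * h) / 2 ^+ k.+1 = 2 * (M * h) / 2 ^+ k / 2.
  by rewrite exprS; field; rewrite gt_eqF.
lra.
Qed.

Lemma picard_limit0 : picard_limit 0 = x0.
Proof.
rewrite -picard_limit_fixed /picard clamp_id //.
by apply/matrixP => i j; rewrite !mxE subrr addr0.
Qed.

Lemma is_derive_picard_limit t : - h < t < h ->
  is_derive t (1 : R) picard_limit (G (picard_limit t)).
Proof.
move=> t_in; pose g i := picard_coord picard_limit i.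
have near_t : \forall s \near t,
    x0 + \col_i (primitive (g i) s - primitive (g i) 0) = picard_limit s.
  have : t \in `](- h), h[ by rewrite in_itv.
  move=> /near_in_itv; apply: filterS => s; rewrite in_itv /= => /andP[? ?].
  by rewrite -picard_limit_fixed /picard clamp_id // !ltW.
apply: near_eq_is_derive near_t _; apply: is_derive_mx_entries => i j.
rewrite (ord1 j); under eq_fun do rewrite !mxE.
have g_der := is_derive_primitive (picard_coord_continuous (i := i) picard_limit_admissible)
  (ltac:(by move: t_in => /andP[? ?]; rewrite !ltW) : - h <= t <= h).
rewrite -[G _ i 0]/(g i t) -[g i t]add0r -[g i t]subr0.
by apply: is_deriveD; apply: is_deriveB.
Qed.

Theorem picard_lindelof : exists2 phi : R -> 'cV[R]_n, phi 0 = x0 &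
  forall t, - h < t < h -> `|x0 - phi t| < r /\ is_derive t (1 : R) phi (G (phi t)).
Proof.
exists picard_limit => [|t t_in]; first exact: picard_limit0.
split; first exact: admissible_ball picard_limit_admissible.
exact: is_derive_picard_limit.
Qed.

End picard_lindelof.

Section solutions.
Context {R : realType}.

Lemma ode_local_existence n (G : 'cV[R]_n -> 'cV[R]_n) (x0 : 'cV[R]_n) (A : set 'cV[R]_n) :
  nbhs x0 A -> locally_lipschitz G x0 ->
  exists2 h : R, 0 < h & exists2 phi : R -> 'cV[R]_n, phi 0 = x0 &
    forall t, - h < t < h -> A (phi t) /\ is_derive t (1 : R) phi (G (phi t)).
Proof.
move=> /nbhs_ballP[rA rA_gt0 rA_sub] [rL rL_gt0 [L L_ge0 G_lip]].
pose r := Num.min rA rL.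
have r_gt0 : 0 < r by rewrite lt_min rA_gt0.
have r_leA : r <= rA by rewrite ge_min lexx.
have r_leL : r <= rL by rewrite ge_min lexx orbT.
have {}G_lip := lipschitz_ball_le r_leL G_lip.
pose M := `|G x0| + L * r.
have M_ge0 : 0 <= M by rewrite addr_ge0 // mulr_ge0 // ltW.
pose h := Num.min (r / (2 * (M + 1))) (2 * (L + 1))^-1.
have h_gt0 : 0 < h by rewrite lt_min divr_gt0 ?invr_gt0 ?mulr_gt0 ?ltr_wpDl.
have hM : M * h <= r / 2.
  have : h <= r / (2 * (M + 1)) by rewrite ge_min lexx.
  rewrite ler_pdivlMr ?mulr_gt0 ?ltr_wpDl // => h_le.
  rewrite ler_pdivlMr //; move: h_gt0; nra.
have hL : L * h <= 2^-1.
  have : h <= (2 * (L + 1))^-1 by rewrite ge_min lexx orbT.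
  rewrite -[_^-1]div1r ler_pdivlMr ?mulr_gt0 ?ltr_wpDl // => h_le.
  rewrite -[_^-1]div1r ler_pdivlMr //; move: h_gt0; nra.
have [phi phi0 phi_sol] := picard_lindelof r_gt0 L_ge0 M_ge0 h_gt0 hM hL G_lip
  (lipschitz_ball_bound L_ge0 G_lip).
exists h => //; exists phi => // t /phi_sol[t_r phi_der]; split => //.
by apply: rA_sub; rewrite -ball_normE /= (lt_le_trans t_r).
Qed.

End solutions.

Section forward_invariance.
Context {R : realType} {V : normedModType R}.

Definition locally_viable (F : V -> V) (C : set V) :=
  forall x, C x -> exists2 d : R, 0 < d & exists2 psi : R -> V, psi 0 = x &
    forall s, 0 <= s <= d -> C (psi s) /\ is_derive s (1 : R) psi (F (psi s)).

Lemma solutions_agree_near (F : V -> V) (x0 : V) (phi psi : R -> V) (d : R) :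
  0 < d -> locally_lipschitz F x0 -> phi 0 = x0 -> psi 0 = x0 ->
  (forall s, 0 <= s <= d -> is_derive s (1 : R) phi (F (phi s))) ->
  (forall s, 0 <= s <= d -> is_derive s (1 : R) psi (F (psi s))) ->
  exists2 d' : R, 0 < d' & forall s, 0 <= s <= d' -> phi s = psi s.
Proof.
move=> d_gt0 [r r_gt0 [L L_ge0 F_lip]] phi0 psi0 phi_der psi_der.
have d_in : (0 : R) <= 0 <= d by rewrite lexx ltW.
have near0 (chi : R -> V) : chi 0 = x0 -> {for 0, continuous chi} ->
    \forall s \near 0, `|x0 - chi s| < r.
  by move=> <- /cvgrPdist_lt; apply.
have [e e_gt0 e_near] := (nbhs_ballP _ _).1 (filterI
  (near0 _ phi0 (is_derive_continuous (phi_der 0 d_in)))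
  (near0 _ psi0 (is_derive_continuous (psi_der 0 d_in)))).
pose d' := Num.min d (e / 2).
have d'_le_d : d' <= d by rewrite ge_min lexx.
have d'_lt_e : d' < e by rewrite gt_min ltr_pdivrMr // ltr_pMr // ltr1n orbT.
exists d'; first by rewrite lt_min d_gt0 divr_gt0.
move=> s s_in; apply/eqP; rewrite -subr_eq0; apply/eqP.
apply: (derive_dominated_zero (w := fun s => phi s - psi s)
  (dw := fun s => F (phi s) - F (psi s)) L_ge0); last exact: s_in.
- by rewrite phi0 psi0 subrr.
- move=> t /andP[t_ge0 t_le]; have t_in : 0 <= t <= d by rewrite t_ge0 (le_trans t_le).
  by apply: is_deriveB; [exact: phi_der | exact: psi_der].
move=> t /andP[t_ge0 t_le]; have [phi_t psi_t] : `|x0 - phi t| < r /\ `|x0 - psi t| < r.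
  by apply: e_near; rewrite -ball_normE /= sub0r normrN ger0_norm // (le_lt_trans t_le).
exact: F_lip.
Qed.

Lemma locally_viable_forward_invariant (Xs : set V) (F : V -> V) (c : V -> R) :
  (forall x, Xs x -> {for x, continuous c}) ->
  (forall x, Xs x -> 0 <= c x -> locally_lipschitz F x) ->
  locally_viable F [set x | Xs x /\ 0 <= c x] ->
  forward_invariant Xs F [set x | Xs x /\ 0 <= c x].
Proof.
move=> c_cont F_lip viable phi T T_ge0 phi_sol phi0.
apply: segment_induction => // [t /andP[t_gt0 t_le_T] IH|t /andP[t_ge0 t_lt_T] IH].
  have [Xt phi_der] := phi_sol t (ltac:(by rewrite (ltW t_gt0))).
  split=> //; apply: (closed_left_limit (g := c \o phi) (closed_ge (y := 0)) t_gt0).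
    exact: continuous_comp (is_derive_continuous phi_der) (c_cont _ Xt).
  by move=> s /IH[].
have [Xt ct] := IH t (ltac:(by rewrite t_ge0 lexx)).
have [d d_gt0 [psi psi0 psi_sol]] := viable _ (conj Xt ct).
pose d1 := Num.min d (T - t).
have d1_gt0 : 0 < d1 by rewrite lt_min d_gt0 subr_gt0.
have d1_le_d : d1 <= d by rewrite ge_min lexx.
have d1_le_T : d1 <= T - t by rewrite ge_min lexx orbT.
have [d' d'_gt0 agree] : exists2 d' : R, 0 < d' &
    forall s, 0 <= s <= d' -> phi (t + s) = psi s.
  apply: (solutions_agree_near d1_gt0 (F_lip _ Xt ct)) => //; first by rewrite addr0.
    move=> s /andP[? ?]; apply: is_derive_translate.
    by apply: (phi_sol _ _).2; apply/andP; split; lra.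
  by move=> s /andP[? ?]; apply: (psi_sol s _).2; apply/andP; split; lra.
have d'_le : Num.min d' d1 <= d' by rewrite ge_min lexx.
have d1_le : Num.min d' d1 <= d1 by rewrite ge_min lexx orbT.
exists (Num.min d' d1) => [|s /andP[t_lt_s s_le]]; first by rewrite lt_min d'_gt0.
rewrite -(subrKC t s) agree; last by apply/andP; split; lra.
by apply: (psi_sol (s - t) _).1; apply/andP; split; lra.
Qed.

End forward_invariance.

Section augmented_system.
Context {R : realType}.

Lemma forward_invariant_locally_viable n (X : set 'cV[R]_n) (F : 'cV[R]_n -> 'cV[R]_n)
    (C : set 'cV[R]_n) :
  open X -> C `<=` X -> (forall x, C x -> locally_lipschitz F x) ->
  forward_invariant X F C -> locally_viable F C.
Proof.
move=> X_open CX F_lip F_inv x Cx.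
have [h h_gt0 [psi psi0 psi_sol]] :=
  ode_local_existence (open_nbhs_nbhs (conj X_open (CX _ Cx))) (F_lip _ Cx).
have psi_in s : 0 <= s <= h / 2 -> - h < s < h.
  by move=> /andP[? ?]; apply/andP; split; lra.
exists (h / 2); first by rewrite divr_gt0.
exists psi => // s s_in; split; last exact: (psi_sol _ (psi_in _ s_in)).2.
apply: (F_inv psi (h / 2)) s_in; first by rewrite divr_ge0 ?ltW.
  by move=> u /psi_in /psi_sol.
by rewrite psi0.
Qed.

Lemma locally_viable_col_mx n p (Fb : 'cV[R]_n -> 'cV[R]_n)
    (F : 'cV[R]_(n + p) -> 'cV[R]_(n + p)) (C : set 'cV[R]_n) :
  (forall x th, C x -> F (col_mx x th) = col_mx (Fb x) 0) ->
  locally_viable Fb C -> locally_viable F [set xh | C (usubmx xh)].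
Proof.
move=> FE viable xh /viable[d d_gt0 [psi psi0 psi_sol]].
exists d => //; exists (fun s => col_mx (psi s) (dsubmx xh)); first by rewrite psi0 vsubmxK.
move=> s /psi_sol[Cs psi_der]; rewrite /= col_mxKu FE //; split => //.
exact: is_derive_col_mx.
Qed.

Lemma augmented_fieldE n m p (a : 'cV[R]_n) (B : 'M[R]_(n, m)) (u : 'cV[R]_m) :
  col_mx a (0 : 'cV[R]_p) + block_mx B 0 0 1%:M *m col_mx u 0 = col_mx (a + B *m u) 0.
Proof. by rewrite mul_block_col !mul0mx !mulmx0 !addr0 add_col_mx addr0. Qed.

Lemma locally_lipschitz_usubmx n p (xh : 'cV[R]_(n + p)) :
  locally_lipschitz (fun yh : 'cV[R]_(n + p) => usubmx yh) xh.
Proof.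
by apply: locally_lipschitz_nonexpansive => x y; rewrite -linearB usubmx_norm_le.
Qed.

Lemma locally_lipschitz_col_mx0 (V : normedModType R) n p (F : V -> 'cV[R]_n) x0 :
  locally_lipschitz F x0 ->
  locally_lipschitz (fun x => col_mx (F x) (0 : 'cV[R]_p)) x0.
Proof.
move=> F_lip; apply: (locally_lipschitz_comp (F := fun v => col_mx v (0 : 'cV[R]_p)) F_lip).
apply: locally_lipschitz_nonexpansive => x y.
by rewrite opp_col_mx add_col_mx subrr col_mx0_norm_le.
Qed.

Lemma C1_on_locally_lipschitz_usubmx (W : normedModType R) n p (X : set 'cV[R]_n)
    (F : 'cV[R]_n -> W) (xh : 'cV[R]_(n + p)) :
  open X -> C1_on X F -> X (usubmx xh) ->
  locally_lipschitz (fun yh : 'cV[R]_(n + p) => F (usubmx yh)) xh.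
Proof.
move=> X_open C1F Xxh; apply: locally_lipschitz_comp (locally_lipschitz_usubmx _) _.
exact: C1_on_open_locally_lipschitz C1F Xxh.
Qed.

Lemma nbhs_usubmx n p (X : set 'cV[R]_n) (xh : 'cV[R]_(n + p)) :
  open X -> X (usubmx xh) -> nbhs xh [set yh : 'cV[R]_(n + p) | X (usubmx yh)].
Proof.
move=> X_open Xxh; apply: (locally_lipschitz_continuous (locally_lipschitz_usubmx xh)).
exact: open_nbhs_nbhs.
Qed.

End augmented_system.

Unset Implicit Arguments.

Theorem lemma4 (R : realType) (n m p : nat)
    (X : set 'cV[R]_n) (U : set 'cV[R]_m)
    (f : 'cV[R]_n -> 'cV[R]_n) (g : 'cV[R]_n -> 'M[R]_(n, m))
    (h hb : 'cV[R]_n -> R) (kb : 'cV[R]_n -> 'cV[R]_m)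
    (ke : 'cV[R]_n -> 'cV[R]_p -> 'cV[R]_m) (eta : 'cV[R]_n -> R) :
  open X ->
  C1_on X f -> C1_on X g ->
  convex_polytope U ->
  C1_on X h ->
  let CS := [set x | X x /\ 0 <= h x] in
  let CB := [set x | X x /\ 0 <= hb x] in
  (* backup controller *)
  C1_on X kb -> (forall x, X x -> U (kb x)) ->
  C1_on X hb ->
  (forall x, bdry CB x -> exists v, 'D_v hb x != 0) ->
  CB `<=` CS ->
  forward_invariant X (fun x => f x + g x *m kb x) CB ->
  (* parameterized expanding controller *)
  C1_on [set xh : 'cV[R]_(n + p) | X (usubmx xh)]
        (fun xh => ke (usubmx xh) (dsubmx xh)) ->
  (forall x th, X x -> U (ke x th)) ->
  (* blending function *)
  C1_on X eta -> (forall x, X x -> 0 <= eta x <= 1) ->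
  (forall x, CB x -> eta x = 1) ->
  (* augmented system *)
  let hatX := [set xh : 'cV[R]_(n + p) | X (usubmx xh)] in
  let fhat := fun xh : 'cV[R]_(n + p) =>
                col_mx (f (usubmx xh)) (0 : 'cV[R]_p) in
  let ghat := fun xh : 'cV[R]_(n + p) =>
                block_mx (g (usubmx xh)) (0 : 'M[R]_(n, p))
                         (0 : 'M[R]_(p, m)) (1%:M : 'M[R]_p) in
  let ks := fun xh : 'cV[R]_(n + p) =>
              col_mx ((1 - eta (usubmx xh)) *: ke (usubmx xh) (dsubmx xh)
                      + eta (usubmx xh) *: kb (usubmx xh)) (0 : 'cV[R]_p) in
  let hatCB := [set xh | hatX xh /\ 0 <= hb (usubmx xh)] in
  forward_invariant hatX (fun xh => fhat xh + ghat xh *m ks xh) hatCB.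
Proof.
move=> X_open C1f C1g _ _ _ CB C1kb _ C1hb _ _ FIb C1ke _ C1eta _ eta1
  hatX fhat ghat ks hatCB.
pose ub xh := (1 - eta (usubmx xh)) *: ke (usubmx xh) (dsubmx xh)
  + eta (usubmx xh) *: kb (usubmx xh).
have -> : (fun xh => fhat xh + ghat xh *m ks xh)
    = fun xh => col_mx (f (usubmx xh) + g (usubmx xh) *m ub xh) 0.
  by apply/funext => xh; rewrite augmented_fieldE.
apply: locally_viable_forward_invariant => [xh Xxh|xh Xxh _|].
- exact: locally_lipschitz_continuous (C1_on_locally_lipschitz_usubmx X_open C1hb Xxh).
- apply: locally_lipschitz_col_mx0; apply: locally_lipschitzD.
    exact: C1_on_locally_lipschitz_usubmx X_open C1f Xxh.
  apply: locally_lipschitz_mulmx; first exact: C1_on_locally_lipschitz_usubmx X_open C1g Xxh.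
  apply: locally_lipschitzD; apply: locally_lipschitzZ.
  + apply: locally_lipschitzD; first exact: locally_lipschitz_cst.
    by apply: locally_lipschitzN; exact: C1_on_locally_lipschitz_usubmx X_open C1eta Xxh.
  + exact: C1_on_locally_lipschitz C1ke (nbhs_usubmx X_open Xxh).
  + exact: C1_on_locally_lipschitz_usubmx X_open C1eta Xxh.
  + exact: C1_on_locally_lipschitz_usubmx X_open C1kb Xxh.
- apply: (locally_viable_col_mx (C := CB) (Fb := fun x => f x + g x *m kb x)).
    by move=> x th CBx; rewrite /ub col_mxKu col_mxKd eta1 // subrr scale0r add0r scale1r.
  apply: forward_invariant_locally_viable FIb => //; first by move=> x [].
  move=> x [Xx _]; apply: locally_lipschitzD; first exact: C1_on_open_locally_lipschitz C1f Xx.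
  apply: locally_lipschitz_mulmx; first exact: C1_on_open_locally_lipschitz C1g Xx.
  exact: C1_on_open_locally_lipschitz C1kb Xx.
Qed.
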